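(* Under the same setting, let $\hat N_A$ be the global dual basis functions defined there. Then for every function $u=\sum_{B=1}^n P_B N_B$ in the spline space spanned by $\{N_A\}$, the coefficients are recovered as $P_A=\int_\Omega \hat N_A\,u\,d\Omega$ for all $A$. Equivalently, the operator $\Pi u=\sum_A\big(\int_\Omega\hat N_A u\,d\Omega\big)N_A$, defined for $u\in L^2(\Omega)$, is a linear projection onto the spline space (it reproduces every spline).
   Context: Setting: $\Omega\subset\mathbb{R}^d$ is partitioned into elements $\Omega^e$ of positive measure; $\{N_A\}_{A=1}^n$ is a nonnegative spline basis with $\int_\Omega N_A>0$; on each element, with local-to-global index map $a\mapsto A(e,a)$ listing the basis functions not identically zero there, $\mathbf{N}^e=\mathbf{C}^e\mathbf{B}^e$ for linearly independent Bernstein functions $\mathbf{B}^e$ and invertible extraction matrix $\mathbf{C}^e$; $\mathbf{R}^e=(\mathbf{C}^e)^{-1}$; $G^e_{ij}=\int_{\Omega^e}B^e_iB^e_j$; $\omega^e_a=\int_{\Omega^e}N_{A(e,a)}/\int_\Omega N_{A(e,a)}$; $\hat{\mathbf{N}}^e=\operatorname{diag}(\boldsymbol{\omega}^e)(\mathbf{R}^e)^T(\mathbf{G}^e)^{-1}\mathbf{B}^e$; and $\hat N_A|_{\Omega^e}=\hat N^e_a$ if $A=A(e,a)$, $0$ otherwise. *)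

From HB Require Import structures.
From mathcomp Require Import all_boot all_order all_algebra.
Unset Printing Implicit Defensive.
Import Order.TTheory GRing.Theory Num.Theory.
Local Open Scope ring_scope.

Section SplineDual.
Variables (R : fieldType) (d m n : nat).

(* Om e x  <=>  x lies in the element Omega^e;  Omega is their union. *)
Definition inOmega (Om : 'I_m -> 'rV[R]_d -> bool) (x : 'rV[R]_d) : bool :=
  [exists e, Om e x].

(* I e f = \int_{Omega^e} f ;  the integral over Omega is the sum over elements *)
Definition intOmega (I : 'I_m -> ('rV[R]_d -> R) -> R) (f : 'rV[R]_d -> R) : R :=
  \sum_(e < m) I e f.

Variables (I : 'I_m -> ('rV[R]_d -> R) -> R) (N : 'I_n -> 'rV[R]_d -> R)
  (ne : 'I_m -> nat) (loc : forall e, 'I_(ne e) -> 'I_n)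
  (Bern : forall e, 'I_(ne e) -> 'rV[R]_d -> R) (C : forall e, 'M[R]_(ne e)).

Definition gram (e : 'I_m) : 'M[R]_(ne e) :=
  \matrix_(i < ne e, j < ne e) I e (fun x => Bern e i x * Bern e j x).

Definition omega (e : 'I_m) (a : 'I_(ne e)) : R :=
  I e (N (loc e a)) / intOmega I (N (loc e a)).

Definition dualLocal (e : 'I_m) (a : 'I_(ne e)) (x : 'rV[R]_d) : R :=
  \sum_(b < ne e)
     omega e a * (((invmx (C e))^T *m invmx (gram e)) a b) * Bern e b x.

Definition dualGlobal (Om : 'I_m -> 'rV[R]_d -> bool) (A : 'I_n)
    (x : 'rV[R]_d) : R :=
  if [pick e | Om e x] is Some e then
    if [pick a | loc e a == A] is Some a then dualLocal e a x else 0
  else 0.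

Definition projPi (Om : 'I_m -> 'rV[R]_d -> bool) (u : 'rV[R]_d -> R)
    (x : 'rV[R]_d) : R :=
  \sum_(A < n) intOmega I (fun y => dualGlobal Om A y * u y) * N A x.

End SplineDual.

(* On an element Omega^e the local dual functions
   diag(omega^e) (R^e)^T (G^e)^-1 B^e are, up to the weights omega^e,
   biorthogonal to N^e = C^e B^e: their pairing matrix is
   (R^e)^T (G^e)^-1 G^e (C^e)^T = 1, where the Gram matrix G^e is invertible
   because the Bernstein functions are linearly independent.  Expanding a
   spline u locally as sum_a P_(A(e,a)) N^e_a gives
   int_(Omega^e) hatN_A u = omega^e_a P_A, while both sides vanish on elements
   where N_A does.  Summing over the elements, the weights
   omega^e_a = int_(Omega^e) N_A / int_Omega N_A add up to 1. *)

From HB Require Import structures.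
From mathcomp Require Import all_boot all_order all_algebra.
From mathcomp Require Import ring.
Import Order.TTheory GRing.Theory Num.Theory.
Local Open Scope ring_scope.

Section Integral.
Context {R : pzRingType} {T : Type} {J : (T -> R) -> R}.
Hypothesis J_lin : forall (c : R) f g, J (fun x => c * f x + g x) = c * J f + J g.
Hypothesis J_ext : forall f g, (forall x, f x = g x) -> J f = J g.

Lemma integral0 : J (fun _ => 0) = 0.
Proof.
have := J_lin 1 (fun _ => 0) (fun _ => 0).
rewrite (@J_ext _ (fun _ => 0)) => [|x]; last by rewrite mulr0 addr0.
by rewrite mul1r -{1}[J _]addr0 => /addrI <-.
Qed.

Lemma integralZ c f : J (fun x => c * f x) = c * J f.
Proof. by rewrite -[RHS]addr0 -integral0 -J_lin; apply: J_ext => x; rewrite addr0. Qed.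

Lemma integral_sum (I : Type) (r : seq I) (F : I -> T -> R) :
  J (fun x => \sum_(i <- r) F i x) = \sum_(i <- r) J (F i).
Proof.
elim: r => [|i r IHr].
  by rewrite big_nil -[RHS]integral0; apply: J_ext => x; rewrite big_nil.
rewrite big_cons -IHr -(mul1r (J (F i))) -J_lin.
by apply: J_ext => x; rewrite big_cons mul1r.
Qed.

End Integral.

Lemma unitmx_of_trivial_kernel (F : fieldType) k (G : 'M[F]_k) :
  (forall v : 'rV_k, v *m G = 0 -> v = 0) -> G \in unitmx.
Proof.
move=> Gker; rewrite -row_free_unit -kermx_eq0; apply/eqP/row_matrixP => i.
by rewrite row0; apply: Gker; rewrite -row_mul mulmx_ker row0.
Qed.

Section Gram.
Context {R : fieldType} {T : Type} {J : (T -> R) -> R}.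
Hypothesis J_lin : forall (c : R) f g, J (fun x => c * f x + g x) = c * J f + J g.
Hypothesis J_ext : forall f g, (forall x, f x = g x) -> J f = J g.
Context {k : nat} {b : 'I_k -> T -> R}.

Local Notation G := (\matrix_(i < k, j < k) J (fun x => b i x * b j x)).

Lemma integral_combination_mul (c c' : 'rV[R]_k) :
  J (fun x => (\sum_i c 0 i * b i x) * (\sum_j c' 0 j * b j x))
  = (c *m G *m c'^T) 0 0.
Proof.
transitivity (J (fun x => \sum_j \sum_i (c 0 i * c' 0 j) * (b i x * b j x))).
  apply: J_ext => x; rewrite mulr_sumr; apply: eq_bigr => j _.
  by rewrite mulr_suml; apply: eq_bigr => i _; ring.
rewrite integral_sum // mxE; apply: eq_bigr => j _.
rewrite integral_sum // !mxE mulr_suml; apply: eq_bigr => i _.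
by rewrite integralZ // !mxE; ring.
Qed.

Lemma gram_unitmx :
  (forall c : 'I_k -> R, J (fun x => (\sum_i c i * b i x) ^+ 2) = 0 ->
     forall i, c i = 0) ->
  G \in unitmx.
Proof.
move=> b_indep; apply: unitmx_of_trivial_kernel => v vG0.
apply/rowP => i; rewrite mxE; apply: (b_indep (v 0)).
under J_ext => x do rewrite expr2.
by rewrite integral_combination_mul vG0 mul0mx mxE.
Qed.

Lemma dual_biorthogonal (Cm : 'M[R]_k) :
  Cm \in unitmx -> G \in unitmx -> forall a a',
  J (fun x => (\sum_j ((invmx Cm)^T *m invmx G) a j * b j x)
              * (\sum_j Cm a' j * b j x))
  = (a == a')%:R.
Proof.
move=> Cunit Gunit a a'; set M := (invmx Cm)^T *m invmx G.
have MGC : M *m G *m Cm^T = 1%:M.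
  by rewrite /M -(mulmxA _ (invmx G)) mulVmx // mulmx1 -trmx_mul mulmxV // trmx1.
transitivity ((row a M *m G *m (row a' Cm)^T) 0 0).
  rewrite -integral_combination_mul; apply: J_ext => x.
  by congr (_ * _); apply: eq_bigr => j _; rewrite [in RHS]mxE.
transitivity ((M *m G *m Cm^T) a a'); last by rewrite MGC mxE.
by rewrite -!row_mul tr_row !mxE; apply: eq_bigr => j _; rewrite !mxE.
Qed.

End Gram.

Section Spline.
Context {R : fieldType} {d m n : nat} {Om : 'I_m -> 'rV[R]_d -> bool}.
Context {I : 'I_m -> ('rV[R]_d -> R) -> R} {N : 'I_n -> 'rV[R]_d -> R}.
Context {ne : 'I_m -> nat} {loc : forall e, 'I_(ne e) -> 'I_n}.
Context {Bern : forall e, 'I_(ne e) -> 'rV[R]_d -> R} {C : forall e, 'M[R]_(ne e)}.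
Hypothesis Om_disj : forall e1 e2 x, Om e1 x -> Om e2 x -> e1 = e2.
Hypothesis I_lin :
  forall e (c : R) f g, I e (fun x => c * f x + g x) = c * I e f + I e g.
Hypothesis I_loc : forall e f g, (forall x, Om e x -> f x = g x) -> I e f = I e g.
Hypothesis loc_inj : forall e, injective (loc e).
Hypothesis N_supp :
  forall e B x, Om e x -> N B x != 0 -> exists a, loc e a = B.
Hypothesis Bern_indep : forall e (c : 'I_(ne e) -> R),
  I e (fun x => (\sum_(i < ne e) c i * Bern e i x) ^+ 2) = 0 -> forall i, c i = 0.
Hypothesis C_unit : forall e, C e \in unitmx.
Hypothesis C_ext : forall e a x, Om e x ->
  N (loc e a) x = \sum_(b < ne e) C e a b * Bern e b x.

Local Notation spline P := (fun x => \sum_(B < n) P B * N B x).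
Local Notation dualG := (dualGlobal R d m n I N ne loc Bern C Om).
Local Notation dualL := (dualLocal R d m n I N ne loc Bern C).
Local Notation omega := (omega R d m n I N ne loc).

Let I_ext e f g : (forall x, f x = g x) -> I e f = I e g.
Proof. by move=> fg; apply: I_loc => x _; apply: fg. Qed.

Lemma spline_on_element e (P : 'I_n -> R) x : Om e x ->
  \sum_(B < n) P B * N B x = \sum_(a < ne e) P (loc e a) * N (loc e a) x.
Proof.
move=> Ox; rewrite (partition_big (loc e) predT) //=; apply: eq_bigr => B _.
case: (pickP (fun a => loc e a == B)) => [a /eqP locB | Bnotloc].
  rewrite (big_pred1 a) ?locB // => a' /=.
  by rewrite -locB (inj_eq (loc_inj e)).
rewrite big_pred0 => [|a /=]; last by rewrite Bnotloc.
have [-> | /(N_supp _ _ _ Ox) [a locB]] := eqVneq (N B x) 0; first by rewrite mulr0.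
by move: (Bnotloc a); rewrite /= locB eqxx.
Qed.

Lemma integral_basis_off_element e A :
  (forall a, loc e a != A) -> I e (N A) = 0.
Proof.
move=> Anotloc; rewrite -(integral0 (I_lin e) (I_ext e)); apply: I_loc => x Ox.
have [// | /(N_supp _ _ _ Ox) [a locA]] := eqVneq (N A x) 0.
by move: (Anotloc a); rewrite locA eqxx.
Qed.

Lemma dualGlobal_on_element e A x : Om e x ->
  dualG A x = if [pick a | loc e a == A] is Some a then dualL e a x else 0.
Proof.
move=> Ox; rewrite /dualGlobal.
by case: pickP => [e' /Om_disj/(_ Ox) -> | /(_ e)]; last rewrite Ox.
Qed.

Lemma integral_dualLocal_spline e a (P : 'I_n -> R) :
  I e (fun x => dualL e a x * spline P x) = omega e a * P (loc e a).
Proof.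
set M := (invmx (C e))^T *m invmx (gram R d m I ne Bern e).
transitivity (I e (fun x => \sum_(a' < ne e) (P (loc e a') * omega e a)
    * ((\sum_j M a j * Bern e j x) * (\sum_j C e a' j * Bern e j x)))).
  apply: I_loc => x Ox; rewrite (spline_on_element _ _ _ Ox) mulr_sumr.
  apply: eq_bigr => a' _; rewrite C_ext // /dualLocal -/M.
  under eq_bigr do rewrite -mulrA; rewrite -mulr_sumr; ring.
rewrite (integral_sum (I_lin e) (I_ext e)).
under eq_bigr do rewrite (integralZ (I_lin e) (I_ext e)).
have Gunit := gram_unitmx (I_lin e) (I_ext e) (Bern_indep e).
under eq_bigr do rewrite (dual_biorthogonal (I_lin e) (I_ext e) _ (C_unit e) Gunit).
rewrite (bigD1 a) //= eqxx mulr1 big1 => [|a' a'a]; first by rewrite addr0 mulrC.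
by rewrite eq_sym (negbTE a'a) mulr0.
Qed.

Lemma integral_dualGlobal_spline e A (P : 'I_n -> R) :
  I e (fun x => dualG A x * spline P x) = I e (N A) / intOmega R d m I (N A) * P A.
Proof.
under I_loc => x Ox do rewrite (dualGlobal_on_element _ _ _ Ox).
case: pickP => [a /eqP <- | Anotloc]; first exact: integral_dualLocal_spline.
rewrite integral_basis_off_element => [|a]; last by rewrite Anotloc.
rewrite !mul0r -[RHS](integral0 (I_lin e) (I_ext e)).
by apply: I_ext => x; rewrite mul0r.
Qed.

Lemma dualGlobal_coefficient A (P : 'I_n -> R) : intOmega R d m I (N A) != 0 ->
  intOmega R d m I (fun x => dualG A x * spline P x) = P A.
Proof.
move=> NA; rewrite /intOmega; under eq_bigr do rewrite integral_dualGlobal_spline.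
by rewrite -!mulr_suml divff ?mul1r.
Qed.

End Spline.

Theorem mainTheorem2
  (R : realFieldType) (d m n : nat)
  (* partition of Omega into elements *)
  (Om : 'I_m -> 'rV[R]_d -> bool)
  (Om_disj : forall e1 e2 x, Om e1 x -> Om e2 x -> e1 = e2)
  (* integration over each element: linear, local, positive, positive measure *)
  (I : 'I_m -> ('rV[R]_d -> R) -> R)
  (I_lin : forall e (c : R) f g, I e (fun x => c * f x + g x) = c * I e f + I e g)
  (I_loc : forall e f g, (forall x, Om e x -> f x = g x) -> I e f = I e g)
  (I_pos : forall e f, (forall x, Om e x -> 0 <= f x) -> 0 <= I e f)
  (I_meas : forall e, 0 < I e (fun _ => 1))
  (* nonnegative spline basis with positive integrals *)
  (N : 'I_n -> 'rV[R]_d -> R)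
  (N_nonneg : forall A x, inOmega R d m Om x -> 0 <= N A x)
  (N_int : forall A, 0 < intOmega R d m I (N A))
  (* local-to-global index maps *)
  (ne : 'I_m -> nat) (loc : forall e, 'I_(ne e) -> 'I_n)
  (loc_inj : forall e, injective (loc e))
  (loc_supp : forall e B,
      (exists a, loc e a = B) <-> (exists x, Om e x /\ N B x <> 0))
  (* linearly independent (in L^2(Omega^e)) Bernstein functions *)
  (Bern : forall e, 'I_(ne e) -> 'rV[R]_d -> R)
  (Bern_indep : forall e (c : 'I_(ne e) -> R),
      I e (fun x => (\sum_(i < ne e) c i * Bern e i x) ^+ 2) = 0 ->
      forall i, c i = 0)
  (* invertible extraction matrices: N^e = C^e B^e on Omega^e *)
  (C : forall e, 'M[R]_(ne e))
  (C_inv : forall e, C e \in unitmx)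
  (C_ext : forall e a x, Om e x ->
      N (loc e a) x = \sum_(b < ne e) C e a b * Bern e b x) :
  forall P : 'I_n -> R,
    let u := fun x => \sum_(B < n) P B * N B x in
    (forall A : 'I_n,
        P A = intOmega R d m I (fun x => dualGlobal R d m n I N ne loc Bern C Om A x * u x))
    /\ (forall x, inOmega R d m Om x -> projPi R d m n I N ne loc Bern C Om u x = u x).
Proof.
move=> P u.
have N_supp e B x : Om e x -> N B x != 0 -> exists a, loc e a = B.
  by move=> Ox /eqP NBx; apply/loc_supp; exists x.
have coefficient A : P A =
    intOmega R d m I (fun x => dualGlobal R d m n I N ne loc Bern C Om A x * u x).
  by rewrite (dualGlobal_coefficient Om_disj I_lin I_loc loc_inj N_supp Bern_indep
    C_inv C_ext) // lt0r_neq0.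
by split=> // x _; apply: eq_bigr => A _; rewrite -coefficient.
Qed.
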